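(* Let $\tau=i\tau_0$ with $\tau_0>0$, and set $f(\alpha)=\dfrac{\vartheta_1(\alpha/2)}{\vartheta_2(\alpha/2)}$ and $g_0(\alpha)=-\dfrac{1}{\vartheta_3\vartheta_4}\cdot\dfrac{\vartheta_2'(\alpha/2)}{\vartheta_2(\alpha/2)}$. Then for all $0<\alpha<\pi$, $$g_0(\alpha)>f(\alpha)>0.$$
   Context: Jacobi theta functions $\vartheta_k(z)=\vartheta_k(z|\tau)$ in the notation of Whittaker–Watson, with $q=e^{\pi i\tau}$, $q^{s}:=e^{\pi i\tau s}$: $\vartheta_1(z)=2\sum_{n\ge0}(-1)^nq^{(n+1/2)^2}\sin((2n+1)z)$, $\vartheta_2(z)=2\sum_{n\ge0}q^{(n+1/2)^2}\cos((2n+1)z)$, $\vartheta_3(z)=1+2\sum_{n\ge1}q^{n^2}\cos(2nz)$, $\vartheta_4(z)=1+2\sum_{n\ge1}(-1)^nq^{n^2}\cos(2nz)$. The theta-constants are $\vartheta_3=\vartheta_3(0)$, $\vartheta_4=\vartheta_4(0)$, and $\vartheta_2'(\alpha/2)$ is the derivative of $\vartheta_2$ evaluated at $\alpha/2$. *)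

From Stdlib Require Import Reals.
From Coquelicot Require Import Coquelicot.
Open Scope R_scope.

(* Nome power for tau = i*tau0 : q^s = e^{pi i tau s} = exp(-pi tau0 s). *)
Definition qpow (tau0 s : R) : R := exp (- PI * tau0 * s).

(* Jacobi theta functions (Whittaker--Watson) at tau = i*tau0, real argument z. *)
Definition theta1 (tau0 z : R) : R :=
  2 * Series (fun n : nat =>
        (-1) ^ n * qpow tau0 ((INR n + /2) ^ 2) * sin ((2 * INR n + 1) * z)).

Definition theta2 (tau0 z : R) : R :=
  2 * Series (fun n : nat =>
        qpow tau0 ((INR n + /2) ^ 2) * cos ((2 * INR n + 1) * z)).

Definition theta3 (tau0 z : R) : R :=
  1 + 2 * Series (fun n : nat =>
        qpow tau0 (INR (S n) ^ 2) * cos (2 * INR (S n) * z)).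

Definition theta4 (tau0 z : R) : R :=
  1 + 2 * Series (fun n : nat =>
        (-1) ^ (S n) * qpow tau0 (INR (S n) ^ 2) * cos (2 * INR (S n) * z)).

Definition f_fun (tau0 alpha : R) : R :=
  theta1 tau0 (alpha / 2) / theta2 tau0 (alpha / 2).

Definition g0_fun (tau0 alpha : R) : R :=
  - (1 / (theta3 tau0 0 * theta4 tau0 0)) *
    (Derive (theta2 tau0) (alpha / 2) / theta2 tau0 (alpha / 2)).

(* Write q = exp (- PI tau0), p = q^2, x = alpha / 2, c = cos 2x and G = prod_k (1 - p^k).
   By Jacobi's triple product, theta2 x = 2 q^(1/4) G cos x prod_k (1 + 2 p^k c + p^(2k)),
   theta1 x = theta2 (PI/2 - x) and theta3 theta4 = G^2 prod_k (1 - p^(2k-1))^2.  Hence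
   f = tan x prod_k (1 - 2 p^k c + p^(2k)) / (1 + 2 p^k c + p^(2k)); each ratio is at most
   ((1 + p^k) / (1 - p^k))^2, so Euler's identity prod_k (1 + p^k) (1 - p^(2k-1)) = 1 gives
   theta3 theta4 f <= tan x.  On the other side
   theta3 theta4 g0 = - theta2' / theta2 = tan x + sum_k 4 p^k sin 2x / (1 + 2 p^k c + p^(2k)),
   which exceeds tan x already by its k = 1 term.
   Infinite products are avoided: every identity and inequality is proved for the truncated
   products, whose expansions have Gaussian binomial coefficients (the finite triple product),
   and passed to the limit with Tannery's theorem. *)

From Stdlib Require Import Reals Lra Lia Arith.
From Coquelicot Require Import Coquelicot.
Open Scope R_scope.

(** * q-Pochhammer symbols and Gaussian binomial coefficients *)

Lemma pow_le_pow_le_1 (x : R) (m n : nat) : 0 <= x <= 1 -> (m <= n)%nat -> x ^ n <= x ^ m.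
Proof.
  intros Hx Hmn. induction Hmn as [|n _ IH]; [lra|].
  simpl. assert (0 <= x ^ n) by (apply pow_le; lra). nra.
Qed.

Fixpoint qpoch (p : R) (n : nat) : R :=
  match n with O => 1 | S k => qpoch p k * (1 - p ^ S k) end.

Section QPochhammer.
Variable p : R.
Hypothesis p_gt0 : 0 < p.
Hypothesis p_lt1 : p < 1.

Lemma pow_S_bounds (n : nat) : 0 <= p ^ S n <= p.
Proof.
  split; [apply pow_le; lra|].
  rewrite <- (pow_1 p) at 2. apply pow_le_pow_le_1; lra || lia.
Qed.

Lemma pow_S_lt_1 (n : nat) : p ^ S n < 1.
Proof. pose proof (pow_S_bounds n). lra. Qed.

Lemma qpoch_pos (n : nat) : 0 < qpoch p n.
Proof.
  induction n as [|n IH]; simpl; [lra|].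
  pose proof (pow_S_lt_1 n). simpl in *. nra.
Qed.

Lemma qpoch_S_le (n : nat) : qpoch p (S n) <= qpoch p n.
Proof.
  pose proof (pow_S_bounds n). pose proof (qpoch_pos n). simpl in *. nra.
Qed.

Lemma qpoch_le_1 (n : nat) : qpoch p n <= 1.
Proof. induction n as [|n IH]; [simpl; lra|]. pose proof (qpoch_S_le n). lra. Qed.

Lemma qpoch_add_le (m n : nat) : qpoch p (m + n) <= qpoch p m.
Proof.
  induction n as [|n IH]; [rewrite Nat.add_0_r; lra|].
  rewrite Nat.add_succ_r. pose proof (qpoch_S_le (m + n)). lra.
Qed.

(* From [exp y >= 1 + y] at [y = a / (1 - a)], then [a / (1 - a) <= a / (1 - p)]. *)
Lemma exp_le_one_minus (a : R) : 0 <= a <= p -> exp (- (a / (1 - p))) <= 1 - a.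
Proof.
  intros Ha.
  assert (Hmono : exp (- (a / (1 - p))) <= exp (- (a / (1 - a)))).
  { assert (a / (1 - a) <= a / (1 - p)).
    { apply Rmult_le_compat_l; [lra|]. apply Rinv_le_contravar; lra. }
    destruct (Req_dec (a / (1 - a)) (a / (1 - p))) as [E|E].
    - rewrite E; lra.
    - left. apply exp_increasing. lra. }
  assert (Hinv : exp (- (a / (1 - a))) <= / / (1 - a)).
  { rewrite exp_Ropp. apply Rinv_le_contravar; [apply Rinv_0_lt_compat; lra|].
    pose proof (exp_ineq1_le (a / (1 - a))).
    replace (/ (1 - a)) with (1 + a / (1 - a)) by (field; lra). lra. }
  rewrite Rinv_inv in Hinv. lra.
Qed.

Definition qpoch_lb : R := exp (- (p / (1 - p) ^ 2)).

Lemma qpoch_ge_exp (n : nat) : exp (- (p * (1 - p ^ n) / (1 - p) ^ 2)) <= qpoch p n.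
Proof.
  induction n as [|n IH].
  - simpl. replace (- (p * (1 - 1) / ((1 - p) * ((1 - p) * 1)))) with 0 by (field; lra).
    rewrite exp_0; lra.
  - replace (- (p * (1 - p ^ S n) / (1 - p) ^ 2))
      with (- (p * (1 - p ^ n) / (1 - p) ^ 2) + - (p ^ S n / (1 - p))) by (simpl; field; lra).
    rewrite exp_plus. simpl qpoch.
    apply Rmult_le_compat; try (left; apply exp_pos); [exact IH|].
    apply exp_le_one_minus, pow_S_bounds.
Qed.

Lemma qpoch_ge_lb (n : nat) : qpoch_lb <= qpoch p n.
Proof.
  eapply Rle_trans; [|apply qpoch_ge_exp].
  assert (0 <= p ^ n) by (apply pow_le; lra).
  assert (0 < (1 - p) ^ 2) by (apply pow_lt; lra).
  unfold qpoch_lb. destruct (Req_dec (p ^ n) 0) as [E|E].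
  - rewrite E, Rminus_0_r, Rmult_1_r. lra.
  - left. apply exp_increasing. apply Ropp_lt_contravar.
    apply Rmult_lt_compat_r; [apply Rinv_0_lt_compat; lra|]. nra.
Qed.

Lemma qpoch_lb_pos : 0 < qpoch_lb.
Proof. apply exp_pos. Qed.

Definition qpoch_inf : R := real (Lim_seq (qpoch p)).

Lemma is_lim_seq_qpoch : is_lim_seq (qpoch p) qpoch_inf.
Proof.
  assert (H : ex_finite_lim_seq (qpoch p)).
  { apply ex_finite_lim_seq_decr with qpoch_lb; [apply qpoch_S_le|apply qpoch_ge_lb]. }
  destruct H as [l Hl]. unfold qpoch_inf. rewrite (is_lim_seq_unique _ _ Hl). exact Hl.
Qed.

Lemma qpoch_inf_pos : 0 < qpoch_inf.
Proof.
  pose proof (is_lim_seq_le _ _ _ _ qpoch_ge_lb (is_lim_seq_const _) is_lim_seq_qpoch) as H.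
  simpl in H. pose proof qpoch_lb_pos. lra.
Qed.

End QPochhammer.

Definition qbinom (p : R) (M k : nat) : R :=
  if (k <=? M)%nat then qpoch p M / (qpoch p k * qpoch p (M - k)) else 0.

Section QBinomial.
Variable p : R.
Hypothesis p_gt0 : 0 < p.
Hypothesis p_lt1 : p < 1.

Lemma qbinom_closed (M k : nat) : (k <= M)%nat ->
  qbinom p M k = qpoch p M / (qpoch p k * qpoch p (M - k)).
Proof. intros H. unfold qbinom. apply Nat.leb_le in H. now rewrite H. Qed.

Lemma qbinom_gt (M k : nat) : (M < k)%nat -> qbinom p M k = 0.
Proof. intros H. unfold qbinom. destruct (Nat.leb_spec k M); [lia|reflexivity]. Qed.

Lemma qbinom_diag (M : nat) : qbinom p M M = 1.
Proof.
  rewrite qbinom_closed, Nat.sub_diag by lia. simpl.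
  pose proof (qpoch_pos p p_gt0 p_lt1 M). field. lra.
Qed.

Lemma qbinom_0_r (M : nat) : qbinom p M 0 = 1.
Proof.
  rewrite qbinom_closed, Nat.sub_0_r by lia. simpl.
  pose proof (qpoch_pos p p_gt0 p_lt1 M). field. lra.
Qed.

Lemma qbinom_sym (M k : nat) : (k <= M)%nat -> qbinom p M k = qbinom p M (M - k).
Proof.
  intros H. rewrite !qbinom_closed by lia. replace (M - (M - k))%nat with k by lia.
  now rewrite Rmult_comm.
Qed.

Lemma qbinom_ge0 (M k : nat) : 0 <= qbinom p M k.
Proof.
  unfold qbinom. destruct (k <=? M)%nat; [|lra].
  pose proof (qpoch_pos p p_gt0 p_lt1 M). pose proof (qpoch_pos p p_gt0 p_lt1 k).
  pose proof (qpoch_pos p p_gt0 p_lt1 (M - k)).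
  apply Rlt_le, Rdiv_lt_0_compat; [lra|]. apply Rmult_lt_0_compat; lra.
Qed.

Lemma qbinom_le (M k : nat) : qbinom p M k <= / (qpoch_lb p * qpoch_lb p).
Proof.
  pose proof (qpoch_lb_pos p).
  assert (0 < / (qpoch_lb p * qpoch_lb p)) by (apply Rinv_0_lt_compat; nra).
  unfold qbinom. destruct (k <=? M)%nat; [|lra].
  pose proof (qpoch_ge_lb p p_gt0 p_lt1 k). pose proof (qpoch_ge_lb p p_gt0 p_lt1 (M - k)).
  pose proof (qpoch_pos p p_gt0 p_lt1 M). pose proof (qpoch_le_1 p p_gt0 p_lt1 M).
  apply Rle_trans with (1 / (qpoch p k * qpoch p (M - k))).
  - apply Rmult_le_compat_r; [left; apply Rinv_0_lt_compat; nra|lra].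
  - unfold Rdiv. rewrite Rmult_1_l. apply Rinv_le_contravar; [nra|].
    apply Rmult_le_compat; lra.
Qed.

Lemma qbinom_pascal (M k : nat) :
  qbinom p (S M) (S k) = qbinom p M k + p ^ S k * qbinom p M (S k).
Proof.
  destruct (lt_eq_lt_dec k M) as [[H|H]|H].
  - destruct (Nat.le_exists_sub (S k) M H) as [r [-> _]].
    rewrite !qbinom_closed by lia.
    replace (S (r + S k) - S k)%nat with (S r) by lia.
    replace (r + S k - k)%nat with (S r) by lia.
    replace (r + S k - S k)%nat with r by lia.
    cbn [qpoch]. replace (S (r + S k)) with (S r + S k)%nat by lia. rewrite pow_add.
    pose proof (qpoch_pos p p_gt0 p_lt1 (r + S k)). pose proof (qpoch_pos p p_gt0 p_lt1 r).
    pose proof (qpoch_pos p p_gt0 p_lt1 k).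
    pose proof (pow_S_lt_1 p p_gt0 p_lt1 r). pose proof (pow_S_lt_1 p p_gt0 p_lt1 k).
    field. repeat split; lra.
  - subst M. rewrite (qbinom_gt k (S k)), !qbinom_diag by lia. ring.
  - rewrite !qbinom_gt by lia. ring.
Qed.

Lemma qbinom_ratio (M k : nat) :
  qbinom p M (S k) * (1 - p ^ S k) = qbinom p M k * (1 - p ^ (M - k)).
Proof.
  destruct (lt_eq_lt_dec k M) as [[H|H]|H].
  - destruct (Nat.le_exists_sub (S k) M H) as [r [-> _]].
    rewrite !qbinom_closed by lia.
    replace (r + S k - k)%nat with (S r) by lia.
    replace (r + S k - S k)%nat with r by lia.
    cbn [qpoch].
    pose proof (qpoch_pos p p_gt0 p_lt1 (r + S k)). pose proof (qpoch_pos p p_gt0 p_lt1 r).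
    pose proof (qpoch_pos p p_gt0 p_lt1 k).
    pose proof (pow_S_lt_1 p p_gt0 p_lt1 r). pose proof (pow_S_lt_1 p p_gt0 p_lt1 k).
    field. repeat split; lra.
  - subst M. rewrite (qbinom_gt k (S k)), Nat.sub_diag by lia. simpl. ring.
  - rewrite !qbinom_gt by lia. ring.
Qed.

Lemma qbinom_pascal' (M k : nat) :
  qbinom p (S M) (S k) = p ^ (M - k) * qbinom p M k + qbinom p M (S k).
Proof. pose proof (qbinom_pascal M k). pose proof (qbinom_ratio M k). lra. Qed.

(* One Pascal step of each kind; the middle term is absent for [k = 0]. *)
Lemma qbinom_SS (M k : nat) :
  qbinom p (S (S M)) (S k) = (1 + p ^ S M) * qbinom p M k
    + match k with O => 0 | S k' => p ^ (M - k') * qbinom p M k' end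
    + p ^ S k * qbinom p M (S k).
Proof.
  rewrite qbinom_pascal, (qbinom_pascal M k).
  destruct k as [|k'].
  - rewrite !qbinom_0_r. pose proof (qbinom_ratio M 0) as HC.
    rewrite qbinom_0_r, Nat.sub_0_r, pow_1 in HC. simpl pow in *. rewrite Rmult_1_r in *.
    assert (E : p ^ M = 1 - qbinom p M 1 * (1 - p)) by lra. rewrite E. ring.
  - rewrite qbinom_pascal'. pose proof (qbinom_ratio M (S k')) as HC.
    destruct (le_lt_dec (S k') M) as [H|H].
    + replace (p ^ S M) with (p ^ S (S k') * p ^ (M - S k')) by (rewrite <- pow_add; f_equal; lia).
      assert (E2 : p ^ S (S k') * qbinom p M (S k') =
                   p ^ S (S k') * (qbinom p M (S k') * (1 - p ^ (M - S k')))
                   + p ^ S (S k') * p ^ (M - S k') * qbinom p M (S k')) by ring.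
      rewrite <- HC in E2. lra.
    + rewrite (qbinom_gt M (S k')), (qbinom_gt M (S (S k'))) by lia. ring.
Qed.

End QBinomial.

(** * Finite Jacobi triple products *)

(* Coefficients of the finite Jacobi triple products expanding
   [cos x * prod2 q K x] and [prod3 q s K] below. *)
Definition coef2 (q : R) (K n : nat) : R :=
  qbinom (q * q) (2 * K + 1) (K + 1 + n) * q ^ (n * n + n).
Definition coef3 (q : R) (K n : nat) : R :=
  qbinom (q * q) (2 * K) (K + n) * q ^ (n * n).

(* [coef3 q K] extends evenly to negative indices, so index [n - 1] is read as [|n - 1|]. *)
Definition pred_refl (n : nat) : nat := match n with O => 1 | S k => k end.

Section Coefficients.
Variable q : R.
Hypothesis q_gt0 : 0 < q.
Hypothesis q_lt1 : q < 1.
Local Notation p := (q * q).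

Let p_gt0 : 0 < p. Proof. nra. Qed.
Let p_lt1 : p < 1. Proof. nra. Qed.

Lemma coef2_gt (K n : nat) : (K < n)%nat -> coef2 q K n = 0.
Proof. intros H. unfold coef2. rewrite qbinom_gt by lia. ring. Qed.

Lemma coef3_gt (K n : nat) : (K < n)%nat -> coef3 q K n = 0.
Proof. intros H. unfold coef3. rewrite qbinom_gt by lia. ring. Qed.

Lemma coef2_S (K n : nat) : coef2 q (S K) n =
  (1 + p ^ S K * p ^ S K) * coef2 q K n + p ^ S K * (coef2 q K (pred n) + coef2 q K (S n)).
Proof.
  unfold coef2.
  replace (2 * S K + 1)%nat with (S (S (2 * K + 1))) by lia.
  replace (S K + 1 + n)%nat with (S (K + 1 + n)) by lia.
  rewrite (qbinom_SS p p_gt0 p_lt1).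
  replace (p ^ S (2 * K + 1)) with (p ^ S K * p ^ S K) by (rewrite <- pow_add; f_equal; lia).
  destruct n as [|n].
  - simpl pred.
    replace (K + 1 + 0)%nat with (S K) by lia.
    replace (K + 1 + 1)%nat with (S (S K)) by lia.
    rewrite (qbinom_sym p (2 * K + 1) K) by lia.
    replace (2 * K + 1 - K)%nat with (S K) by lia.
    simpl pow. ring.
  - simpl pred.
    replace (K + 1 + S n)%nat with (S (S (K + n))) by lia.
    replace (K + 1 + S (S n))%nat with (S (S (S (K + n)))) by lia.
    replace (K + 1 + n)%nat with (S (K + n)) by lia.
    replace (q ^ (S (S n) * S (S n) + S (S n))) with (q ^ (S n * S n + S n) * p ^ S (S n))
      by (rewrite Rpow_mult_distr, <- !pow_add; f_equal; nia).
    replace (q ^ (S n * S n + S n)) with (q ^ (n * n + n) * p ^ S n)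
      by (rewrite Rpow_mult_distr, <- !pow_add; f_equal; nia).
    destruct (le_lt_dec n K) as [H|H].
    + replace (p ^ S (S (S (K + n)))) with (p ^ S K * p ^ S (S n)) by (rewrite <- pow_add; f_equal; lia).
      assert (E : p ^ (2 * K + 1 - S (K + n)) * p ^ S n = p ^ S K)
        by (rewrite <- pow_add; f_equal; lia).
      rewrite <- E. ring.
    + rewrite !(qbinom_gt p (2 * K + 1)) by lia. ring.
Qed.

Lemma coef3_S (K n : nat) : coef3 q (S K) n =
  (1 + q ^ (2 * K + 1) * q ^ (2 * K + 1)) * coef3 q K n
  + q ^ (2 * K + 1) * (coef3 q K (pred_refl n) + coef3 q K (S n)).
Proof.
  unfold coef3.
  replace (2 * S K)%nat with (S (S (2 * K))) by lia.
  replace (S K + n)%nat with (S (K + n)) by lia.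
  rewrite (qbinom_SS p p_gt0 p_lt1).
  replace (p ^ S (2 * K)) with (q ^ (2 * K + 1) * q ^ (2 * K + 1))
    by (rewrite Rpow_mult_distr; f_equal; f_equal; lia).
  destruct n as [|n].
  - simpl pred_refl. rewrite Nat.add_0_r.
    destruct K as [|K].
    + simpl. rewrite (qbinom_gt p 0 1) by lia. ring.
    + rewrite (qbinom_sym p (2 * S K) K) by lia.
      replace (2 * S K - K)%nat with (S (S K)) by lia.
      replace (S K + 1)%nat with (S (S K)) by lia.
      replace (p ^ S (S K)) with (q ^ (2 * S K + 1) * q ^ 1)
        by (rewrite Rpow_mult_distr, <- !pow_add; f_equal; lia).
      simpl pow. ring.
  - simpl pred_refl.
    replace (K + S n)%nat with (S (K + n)) by lia.
    replace (K + S (S n))%nat with (S (S (K + n))) by lia.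
    replace (q ^ (S (S n) * S (S n))) with (q ^ (S n * S n) * q ^ (2 * S n + 1))
      by (rewrite <- pow_add; f_equal; nia).
    replace (q ^ (S n * S n)) with (q ^ (n * n) * q ^ (2 * n + 1))
      by (rewrite <- pow_add; f_equal; nia).
    destruct (le_lt_dec n K) as [H|H].
    + replace (p ^ S (S (K + n))) with (q ^ (2 * K + 1) * q ^ (2 * S n + 1))
        by (rewrite Rpow_mult_distr, <- !pow_add; f_equal; lia).
      assert (E : p ^ (2 * K - (K + n)) * q ^ (2 * n + 1) = q ^ (2 * K + 1))
        by (rewrite Rpow_mult_distr, <- !pow_add; f_equal; lia).
      rewrite <- E. ring.
    + rewrite !(qbinom_gt p (2 * K)) by lia. ring.
Qed.

End Coefficients.

(* Multiplying a cosine polynomial by [1 + a^2 + 2 a cos 2x] shifts its frequencies by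
   [+-2x]; the two boundary terms are the overflow at the top frequency. *)
Lemma sum_cos_mul (b : nat -> R) (a x : R) (L : nat) :
  sum_f_R0 (fun n => b n * cos ((2 * INR n + 1) * x)) L * (1 + a * a + 2 * a * cos (2 * x)) =
  sum_f_R0 (fun n => ((1 + a * a) * b n + a * (b (pred n) + b (S n))) * cos ((2 * INR n + 1) * x)) L
  - a * b (S L) * cos ((2 * INR L + 1) * x) + a * b L * cos ((2 * INR L + 3) * x).
Proof.
  assert (Hprod : forall y, 2 * cos (2 * x) * cos y = cos (y + 2 * x) + cos (y - 2 * x))
    by (intros y; rewrite cos_plus, cos_minus; ring).
  induction L as [|L IH].
  - simpl. pose proof (Hprod x) as H.
    replace (x - 2 * x) with (- x) in H by ring. rewrite cos_neg in H.
    replace (x + 2 * x) with ((2 * 0 + 3) * x) in H by ring.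
    replace ((2 * 0 + 1) * x) with x by ring.
    transitivity (b 0%nat * cos x * (1 + a * a) + a * b 0%nat * (2 * cos (2 * x) * cos x)); [ring|].
    rewrite H. ring.
  - rewrite !tech5, Rmult_plus_distr_r, IH, S_INR.
    pose proof (Hprod ((2 * (INR L + 1) + 1) * x)) as H.
    replace ((2 * (INR L + 1) + 1) * x + 2 * x) with ((2 * (INR L + 1) + 3) * x) in H by ring.
    replace ((2 * (INR L + 1) + 1) * x - 2 * x) with ((2 * INR L + 1) * x) in H by ring.
    replace ((2 * INR L + 3) * x) with ((2 * (INR L + 1) + 1) * x) by ring.
    simpl pred.
    transitivity (sum_f_R0 (fun n => ((1 + a * a) * b n + a * (b (pred n) + b (S n))) * cos ((2 * INR n + 1) * x)) L
      - a * b (S L) * cos ((2 * INR L + 1) * x) + a * b L * cos ((2 * (INR L + 1) + 1) * x)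
      + b (S L) * cos ((2 * (INR L + 1) + 1) * x) * (1 + a * a)
      + a * b (S L) * (2 * cos (2 * x) * cos ((2 * (INR L + 1) + 1) * x))); [ring|].
    rewrite H. ring.
Qed.

(* The analogue for the even sums [2 sum E n s^n - E 0], evaluated at [s = +-1]. *)
Lemma sum_pow_mul (E : nat -> R) (a s : R) (L : nat) : s * s = 1 ->
  (2 * sum_f_R0 (fun n => E n * s ^ n) L - E 0%nat) * (1 + a * a + 2 * a * s) =
  2 * sum_f_R0 (fun n => ((1 + a * a) * E n + a * (E (pred_refl n) + E (S n))) * s ^ n) L
  - ((1 + a * a) * E 0%nat + a * (E 1%nat + E 1%nat))
  - 2 * a * E (S L) * s ^ L + 2 * a * E L * s ^ S L.
Proof.
  intros Hs.
  assert (Hss : forall m, s ^ S (S m) = s ^ m) by (intros m; simpl; rewrite <- Rmult_assoc, Hs; ring).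
  induction L as [|L IH].
  - simpl. ring.
  - rewrite !tech5.
    transitivity ((2 * sum_f_R0 (fun n => E n * s ^ n) L - E 0%nat) * (1 + a * a + 2 * a * s)
       + 2 * E (S L) * s ^ S L * (1 + a * a + 2 * a * s)); [ring|].
    rewrite IH. simpl pred_refl.
    transitivity (2 * sum_f_R0 (fun n => ((1 + a * a) * E n + a * (E (pred_refl n) + E (S n))) * s ^ n) L
       - ((1 + a * a) * E 0%nat + a * (E 1%nat + E 1%nat)) - 2 * a * E (S L) * s ^ L
       + 2 * a * E L * s ^ S L + 2 * E (S L) * s ^ S L * (1 + a * a)
       + 4 * a * E (S L) * s ^ S (S L)); [simpl; ring|].
    rewrite !Hss. ring.
Qed.

Fixpoint prod2 (q : R) (K : nat) (x : R) : R :=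
  match K with
  | O => 1
  | S k => prod2 q k x * (1 + (q * q) ^ S k * (q * q) ^ S k + 2 * (q * q) ^ S k * cos (2 * x))
  end.

Fixpoint prod3 (q s : R) (K : nat) : R :=
  match K with
  | O => 1
  | S k => prod3 q s k * (1 + q ^ (2 * k + 1) * q ^ (2 * k + 1) + 2 * q ^ (2 * k + 1) * s)
  end.

Section FiniteTripleProduct.
Variable q : R.
Hypothesis q_gt0 : 0 < q.
Hypothesis q_lt1 : q < 1.

Let p_gt0 : 0 < q * q. Proof. nra. Qed.
Let p_lt1 : q * q < 1. Proof. nra. Qed.

Lemma prod2_expand (K : nat) (x : R) :
  cos x * prod2 q K x = sum_f_R0 (fun n => coef2 q K n * cos ((2 * INR n + 1) * x)) K.
Proof.
  induction K as [|K IH].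
  - simpl. unfold coef2. simpl. rewrite qbinom_diag by assumption.
    replace ((2 * 0 + 1) * x) with x by ring. ring.
  - cbn [prod2]. rewrite <- Rmult_assoc, IH.
    replace (sum_f_R0 (fun n => coef2 q K n * cos ((2 * INR n + 1) * x)) K)
      with (sum_f_R0 (fun n => coef2 q K n * cos ((2 * INR n + 1) * x)) (S K))
      by (rewrite tech5, (coef2_gt q K (S K)) by lia; ring).
    rewrite sum_cos_mul, (coef2_gt q K (S (S K))), (coef2_gt q K (S K)) by lia.
    rewrite !Rmult_0_r, !Rmult_0_l, Rminus_0_r, Rplus_0_r.
    apply sum_eq. intros i _. now rewrite (coef2_S q q_gt0 q_lt1 K i).
Qed.

Lemma prod3_expand (s : R) (K : nat) : s * s = 1 ->
  prod3 q s K = 2 * sum_f_R0 (fun n => coef3 q K n * s ^ n) K - coef3 q K 0.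
Proof.
  intros Hs. induction K as [|K IH].
  - simpl. unfold coef3. simpl. rewrite qbinom_diag by assumption. ring.
  - cbn [prod3]. rewrite IH.
    replace (sum_f_R0 (fun n => coef3 q K n * s ^ n) K)
      with (sum_f_R0 (fun n => coef3 q K n * s ^ n) (S K))
      by (rewrite tech5, (coef3_gt q K (S K)) by lia; ring).
    rewrite (sum_pow_mul _ _ _ _ Hs), (coef3_gt q K (S (S K))), (coef3_gt q K (S K)) by lia.
    rewrite (coef3_S q q_gt0 q_lt1 K 0). simpl pred_refl.
    rewrite (sum_eq _ (fun n => coef3 q (S K) n * s ^ n))
      by (intros i _; now rewrite (coef3_S q q_gt0 q_lt1 K i)).
    ring.
Qed.

End FiniteTripleProduct.

Lemma is_derive_sum_cos (c : nat -> R) (L : nat) (x : R) :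
  is_derive (fun y => sum_f_R0 (fun n => c n * cos ((2 * INR n + 1) * y)) L) x
            (- sum_f_R0 (fun n => c n * ((2 * INR n + 1) * sin ((2 * INR n + 1) * x))) L).
Proof.
  induction L as [|L IH].
  - simpl. auto_derive; [auto|ring].
  - simpl. rewrite Ropp_plus_distr.
    apply (is_derive_plus (fun y => sum_f_R0 (fun n => c n * cos ((2 * INR n + 1) * y)) L)
       (fun y => c (S L) * cos ((2 * INR (S L) + 1) * y))); [exact IH|].
    auto_derive; [auto|ring].
Qed.

Fixpoint prod2_deriv (q : R) (K : nat) (x : R) : R :=
  match K with
  | O => 0
  | S k => prod2_deriv q k x * (1 + (q * q) ^ S k * (q * q) ^ S k + 2 * (q * q) ^ S k * cos (2 * x))
           - prod2 q k x * (4 * (q * q) ^ S k * sin (2 * x))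
  end.

Lemma is_derive_prod2 (q : R) (K : nat) (x : R) : is_derive (prod2 q K) x (prod2_deriv q K x).
Proof.
  induction K as [|K IH].
  - apply (is_derive_const (K := R_AbsRing) (V := R_NormedModule) 1 x).
  - set (a := (q * q) ^ S K).
    assert (HD : is_derive (fun y => 1 + a * a + 2 * a * cos (2 * y)) x (- (4 * a * sin (2 * x))))
      by (auto_derive; [auto|ring]).
    cbn [prod2_deriv]. unfold Rminus. rewrite Ropp_mult_distr_r.
    exact (is_derive_mult (prod2 q K) _ x _ _ IH HD Rmult_comm).
Qed.

Lemma prod2_expand_deriv (q : R) (K : nat) (x : R) : 0 < q < 1 ->
  sum_f_R0 (fun n => coef2 q K n * ((2 * INR n + 1) * sin ((2 * INR n + 1) * x))) K
  = sin x * prod2 q K x - cos x * prod2_deriv q K x.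
Proof.
  intros [q_gt0 q_lt1].
  assert (Hsum := is_derive_sum_cos (coef2 q K) K x).
  assert (Hprod : is_derive (fun y => cos y * prod2 q K y) x
                    (- sin x * prod2 q K x + cos x * prod2_deriv q K x)).
  { apply (is_derive_mult cos (prod2 q K)); [|apply is_derive_prod2|exact Rmult_comm].
    auto_derive; [auto|ring]. }
  apply (is_derive_ext _ (fun y => sum_f_R0 (fun n => coef2 q K n * cos ((2 * INR n + 1) * y)) K))
    in Hprod; [|intros y; apply prod2_expand; assumption].
  apply is_derive_unique in Hsum. apply is_derive_unique in Hprod.
  rewrite Hsum in Hprod. lra.
Qed.

Lemma sq_one_minus_le (t c : R) : 0 <= t -> -1 <= c -> (1 - t) * (1 - t) <= 1 + t * t + 2 * t * c.
Proof. intros. nra. Qed.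

Fixpoint prod_plus (p : R) (K : nat) : R :=
  match K with O => 1 | S k => prod_plus p k * (1 + p ^ S k) end.

Fixpoint prod_odd (p : R) (K : nat) : R :=
  match K with O => 1 | S k => prod_odd p k * (1 - p ^ (2 * k + 1)) end.

Section FiniteProducts.
Variable p : R.
Hypothesis p_gt0 : 0 < p.
Hypothesis p_lt1 : p < 1.

Lemma prod_plus_pos (K : nat) : 0 < prod_plus p K.
Proof.
  induction K as [|K IH]; simpl; [lra|].
  pose proof (pow_S_bounds p p_gt0 p_lt1 K). simpl in *. nra.
Qed.

Lemma prod_odd_pos (K : nat) : 0 < prod_odd p K.
Proof.
  induction K as [|K IH]; cbn [prod_odd]; [lra|].
  rewrite Nat.add_1_r. pose proof (pow_S_lt_1 p p_gt0 p_lt1 (2 * K)). nra.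
Qed.

Lemma prod_plus_qpoch_le_1 (K : nat) : prod_plus p K * qpoch p K <= 1.
Proof.
  induction K as [|K IH]; simpl; [lra|].
  pose proof (pow_S_bounds p p_gt0 p_lt1 K). pose proof (prod_plus_pos K).
  pose proof (qpoch_pos p p_gt0 p_lt1 K). simpl in *.
  replace (prod_plus p K * (1 + p * p ^ K) * (qpoch p K * (1 - p * p ^ K)))
    with (prod_plus p K * qpoch p K * (1 - (p * p ^ K) * (p * p ^ K))) by ring.
  assert (0 <= 1 - (p * p ^ K) * (p * p ^ K) <= 1) by nra. nra.
Qed.

(* Finite form of Euler's identity [prod (1 + p^k) * prod (1 - p^(2k-1)) = 1]. *)
Lemma prod_plus_odd_qpoch (K : nat) : prod_plus p K * prod_odd p K * qpoch p K = qpoch p (2 * K).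
Proof.
  induction K as [|K IH]; [simpl; ring|].
  replace (2 * S K)%nat with (S (S (2 * K))) by lia.
  cbn [prod_plus prod_odd qpoch]. rewrite <- IH.
  replace (p ^ S (S (2 * K))) with (p ^ S K * p ^ S K) by (rewrite <- pow_add; f_equal; lia).
  replace (S (2 * K)) with (2 * K + 1)%nat by lia. ring.
Qed.

Lemma prod_plus_odd_le_1 (K : nat) : prod_plus p K * prod_odd p K <= 1.
Proof.
  pose proof (qpoch_pos p p_gt0 p_lt1 K) as HK.
  apply Rmult_le_reg_r with (qpoch p K); [exact HK|].
  rewrite prod_plus_odd_qpoch, Rmult_1_l.
  replace (2 * K)%nat with (K + K)%nat by lia. apply qpoch_add_le; assumption.
Qed.

Lemma qpoch_le_prod_odd (K : nat) : qpoch p (2 * K) <= prod_odd p K.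
Proof.
  rewrite <- prod_plus_odd_qpoch.
  pose proof (prod_plus_qpoch_le_1 K). pose proof (prod_odd_pos K).
  replace (prod_plus p K * prod_odd p K * qpoch p K)
    with (prod_odd p K * (prod_plus p K * qpoch p K)) by ring. nra.
Qed.

End FiniteProducts.

Lemma prod2_factor_ge (q : R) (k : nat) (y : R) :
  (1 - (q * q) ^ k) * (1 - (q * q) ^ k) <= 1 + (q * q) ^ k * (q * q) ^ k + 2 * (q * q) ^ k * cos (2 * y).
Proof.
  apply sq_one_minus_le; [apply pow_le, Rle_0_sqr|apply COS_bound].
Qed.

Lemma prod2_factor_ge0 (q : R) (k : nat) (y : R) : 0 <= 1 + (q * q) ^ k * (q * q) ^ k + 2 * (q * q) ^ k * cos (2 * y).
Proof. pose proof (prod2_factor_ge q k y). pose proof (Rle_0_sqr (1 - (q * q) ^ k)). unfold Rsqr in *. lra. Qed.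

Lemma prod3_mul_opp (q : R) (K : nat) : prod3 q 1 K * prod3 q (-1) K = prod_odd (q * q) K * prod_odd (q * q) K.
Proof.
  induction K as [|K IH]; cbn [prod3 prod_odd]; [ring|].
  replace ((q * q) ^ (2 * K + 1)) with (q ^ (2 * K + 1) * q ^ (2 * K + 1)) by (rewrite Rpow_mult_distr; reflexivity).
  transitivity (prod3 q 1 K * prod3 q (-1) K
    * ((1 - q ^ (2 * K + 1) * q ^ (2 * K + 1)) * (1 - q ^ (2 * K + 1) * q ^ (2 * K + 1)))); [ring|].
  rewrite IH. ring.
Qed.

Section Prod2Bounds.
Variable q : R.
Hypothesis q_gt0 : 0 < q.
Hypothesis q_lt1 : q < 1.
Local Notation p := (q * q).

Let p_gt0 : 0 < p. Proof. nra. Qed.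
Let p_lt1 : p < 1. Proof. nra. Qed.

Lemma prod2_ge_qpoch (K : nat) (y : R) : qpoch p K * qpoch p K <= prod2 q K y.
Proof.
  induction K as [|K IH]; cbn [prod2 qpoch]; [lra|].
  pose proof (qpoch_pos p p_gt0 p_lt1 K). pose proof (prod2_factor_ge q (S K) y).
  pose proof (pow_S_lt_1 p p_gt0 p_lt1 K).
  replace (qpoch p K * (1 - p ^ S K) * (qpoch p K * (1 - p ^ S K)))
    with ((qpoch p K * qpoch p K) * ((1 - p ^ S K) * (1 - p ^ S K))) by ring.
  apply Rmult_le_compat; nra.
Qed.

Lemma prod2_pos (K : nat) (y : R) : 0 < prod2 q K y.
Proof.
  pose proof (qpoch_pos p p_gt0 p_lt1 K). pose proof (prod2_ge_qpoch K y). nra.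
Qed.

(* Every later factor only adds a nonnegative term to [- prod2_deriv / prod2]. *)
Lemma prod2_deriv_bound (K : nat) (x : R) : 0 <= sin (2 * x) ->
  prod2 q (S K) x * (4 * p * sin (2 * x)) <=
  - prod2_deriv q (S K) x * (1 + p * p + 2 * p * cos (2 * x)).
Proof.
  intros Hs. induction K as [|K IH].
  - simpl. right. ring.
  - remember (S K) as k eqn:Hk. cbn [prod2 prod2_deriv].
    set (D := 1 + p ^ S k * p ^ S k + 2 * p ^ S k * cos (2 * x)).
    assert (HD : 0 <= D) by apply prod2_factor_ge0.
    assert (HD1 : 0 <= 1 + p * p + 2 * p * cos (2 * x))
      by (pose proof (prod2_factor_ge0 q 1 x); rewrite pow_1 in *; lra).
    pose proof (pow_S_bounds p p_gt0 p_lt1 k). pose proof (prod2_pos k x).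
    assert (0 <= prod2 q k x * (4 * p ^ S k * sin (2 * x)) * (1 + p * p + 2 * p * cos (2 * x)))
      by (apply Rmult_le_pos; [apply Rmult_le_pos|]; nra).
    assert (prod2 q k x * (4 * p * sin (2 * x)) * D
            <= - prod2_deriv q k x * (1 + p * p + 2 * p * cos (2 * x)) * D)
      by (apply Rmult_le_compat_r; assumption).
    nra.
Qed.

(* Factorwise, [y -> pi/2 - y] flips the sign of [cos 2y]; each ratio of factors is at most
   [((1 + t) / (1 - t))^2]. *)
Lemma prod2_reflect_le (K : nat) (y : R) :
  prod2 q K (PI / 2 - y) * (qpoch p K * qpoch p K) <= prod2 q K y * (prod_plus p K * prod_plus p K).
Proof.
  induction K as [|K IH]; cbn [prod2 qpoch prod_plus]; [lra|].
  replace (cos (2 * (PI / 2 - y))) with (- cos (2 * y))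
    by (replace (2 * (PI / 2 - y)) with (PI - 2 * y) by field;
        rewrite cos_minus, cos_PI, sin_PI; ring).
  set (t := p ^ S K). set (c := cos (2 * y)).
  assert (Ht : 0 <= t <= 1) by (pose proof (pow_S_lt_1 p p_gt0 p_lt1 K);
                                pose proof (pow_S_bounds p p_gt0 p_lt1 K); unfold t; lra).
  assert (Hc : -1 <= c <= 1) by apply COS_bound.
  pose proof (prod2_pos K (PI / 2 - y)). pose proof (prod2_pos K y).
  pose proof (qpoch_pos p p_gt0 p_lt1 K). pose proof (prod_plus_pos p p_gt0 p_lt1 K).
  assert (Hf : (1 + t * t + 2 * t * - c) * ((1 - t) * (1 - t))
               <= (1 + t * t + 2 * t * c) * ((1 + t) * (1 + t)))
    by (assert (0 <= 4 * t * (1 + t * t) * (1 + c)) by (apply Rmult_le_pos; nra); nra).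
  assert (Hf0 : 0 <= (1 + t * t + 2 * t * - c) * ((1 - t) * (1 - t)))
    by (apply Rmult_le_pos; nra).
  transitivity ((prod2 q K (PI / 2 - y) * (qpoch p K * qpoch p K))
                * ((1 + t * t + 2 * t * - c) * ((1 - t) * (1 - t)))); [right; ring|].
  transitivity ((prod2 q K y * (prod_plus p K * prod_plus p K))
                * ((1 + t * t + 2 * t * c) * ((1 + t) * (1 + t)))); [|right; ring].
  apply Rmult_le_compat; try assumption. apply Rmult_le_pos; nra.
Qed.

End Prod2Bounds.

(* [tan x] times this is the [k = 1] term [4 p sin 2x / (1 + p^2 + 2 p cos 2x)]
   of [- d/dx log prod2]. *)
Definition first_factor_gain (q x : R) : R :=
  8 * (q * q) * cos x * cos x / (1 + (q * q) * (q * q) + 2 * (q * q) * cos (2 * x)).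

Section KeyInequality.
Variable q : R.
Hypothesis q_gt0 : 0 < q.
Hypothesis q_lt1 : q < 1.
Local Notation p := (q * q).

Let p_gt0 : 0 < p. Proof. nra. Qed.
Let p_lt1 : p < 1. Proof. nra. Qed.

Lemma first_factor_denom_pos (x : R) : 0 < 1 + p * p + 2 * p * cos (2 * x).
Proof. pose proof (prod2_factor_ge q 1 x). rewrite pow_1 in *. nra. Qed.

Lemma first_factor_gain_pos (x : R) : 0 < x < PI / 2 -> 0 < first_factor_gain q x.
Proof.
  intros Hx. assert (0 < cos x) by (apply cos_gt_0; lra).
  pose proof (first_factor_denom_pos x).
  apply Rdiv_lt_0_compat; [repeat apply Rmult_lt_0_compat|]; lra.
Qed.

Lemma prod2_reflect_le_odd (K : nat) (y : R) :
  prod2 q K (PI / 2 - y) * ((qpoch p K * prod_odd p K) * (qpoch p K * prod_odd p K))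
  <= prod2 q K y.
Proof.
  pose proof (prod2_reflect_le q q_gt0 q_lt1 K y).
  pose proof (prod_plus_odd_le_1 p p_gt0 p_lt1 K).
  pose proof (prod_plus_pos p p_gt0 p_lt1 K). pose proof (prod_odd_pos p p_gt0 p_lt1 K).
  pose proof (prod2_pos q q_gt0 q_lt1 K (PI / 2 - y)). pose proof (prod2_pos q q_gt0 q_lt1 K y).
  set (W := prod_odd p K) in *. set (P := prod_plus p K) in *.
  apply Rle_trans with (prod2 q K y * ((P * W) * (P * W))).
  - replace (prod2 q K y * ((P * W) * (P * W))) with (prod2 q K y * (P * P) * (W * W)) by ring.
    replace (prod2 q K (PI / 2 - y) * ((qpoch p K * W) * (qpoch p K * W)))
      with (prod2 q K (PI / 2 - y) * (qpoch p K * qpoch p K) * (W * W)) by ring.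
    apply Rmult_le_compat_r; [nra|assumption].
  - assert (0 <= P * W <= 1) by nra.
    rewrite <- (Rmult_1_r (prod2 q K y)) at 2. apply Rmult_le_compat_l; nra.
Qed.

Lemma prod2_log_deriv_ge (K : nat) (x : R) : 0 < x < PI / 2 ->
  sin x * prod2 q (S K) x * (1 + first_factor_gain q x)
  <= sin x * prod2 q (S K) x - cos x * prod2_deriv q (S K) x.
Proof.
  intros Hx.
  assert (0 < sin x) by (apply sin_gt_0; lra).
  assert (0 < cos x) by (apply cos_gt_0; lra).
  assert (Hs2 : sin (2 * x) = 2 * sin x * cos x) by apply sin_2a.
  pose proof (first_factor_denom_pos x) as HD.
  pose proof (prod2_deriv_bound q q_gt0 q_lt1 K x ltac:(rewrite Hs2; nra)) as HB.
  set (D := 1 + p * p + 2 * p * cos (2 * x)) in *.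
  enough (sin x * prod2 q (S K) x * first_factor_gain q x <= - cos x * prod2_deriv q (S K) x) by lra.
  replace (sin x * prod2 q (S K) x * first_factor_gain q x)
    with (cos x * (prod2 q (S K) x * (4 * p * sin (2 * x))) / D)
    by (unfold first_factor_gain; fold D; rewrite Hs2; field; lra).
  apply Rmult_le_reg_r with D; [exact HD|].
  unfold Rdiv. rewrite Rmult_assoc, Rinv_l, Rmult_1_r by lra.
  replace (- cos x * prod2_deriv q (S K) x * D) with (cos x * (- prod2_deriv q (S K) x * D)) by ring.
  apply Rmult_le_compat_l; lra.
Qed.

Lemma prod2_key_ineq (K : nat) (x : R) : 0 < x < PI / 2 ->
  (1 + first_factor_gain q x) * (cos (PI / 2 - x) * prod2 q (S K) (PI / 2 - x))
    * ((qpoch p (S K) * prod_odd p (S K)) * (qpoch p (S K) * prod_odd p (S K)))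
  <= sin x * prod2 q (S K) x - cos x * prod2_deriv q (S K) x.
Proof.
  intros Hx. rewrite cos_shift.
  assert (0 < sin x) by (apply sin_gt_0; lra).
  pose proof (first_factor_gain_pos x Hx).
  eapply Rle_trans; [|apply prod2_log_deriv_ge, Hx].
  set (Q := (qpoch p (S K) * prod_odd p (S K)) * (qpoch p (S K) * prod_odd p (S K))).
  replace ((1 + first_factor_gain q x) * (sin x * prod2 q (S K) (PI / 2 - x)) * Q)
    with (((1 + first_factor_gain q x) * sin x) * (prod2 q (S K) (PI / 2 - x) * Q)) by ring.
  replace (sin x * prod2 q (S K) x * (1 + first_factor_gain q x))
    with (((1 + first_factor_gain q x) * sin x) * prod2 q (S K) x) by ring.
  apply Rmult_le_compat_l; [nra|apply prod2_reflect_le_odd].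
Qed.

End KeyInequality.

(** * Tannery's theorem and the M-test *)

Lemma ex_series_Rabs_le (a M : nat -> R) :
  (forall n, Rabs (a n) <= M n) -> ex_series M -> ex_series a.
Proof. intros HM exM. apply (ex_series_le a M); [exact HM|exact exM]. Qed.

Lemma Series_Rabs_le (a M : nat -> R) :
  (forall n, Rabs (a n) <= M n) -> ex_series M -> Rabs (Series a) <= Series M.
Proof.
  intros HM exM. eapply Rle_trans.
  - apply Series_Rabs, (ex_series_Rabs_le _ M); [|exact exM].
    intros n. rewrite Rabs_Rabsolu. apply HM.
  - apply Series_le; [|exact exM]. intros n. split; [apply Rabs_pos|apply HM].
Qed.

Lemma is_lim_seq_sum_f_R0 (a : nat -> R) : ex_series a -> is_lim_seq (sum_f_R0 a) (Series a).
Proof.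
  intros H. apply Series_correct in H.
  apply is_lim_seq_ext with (sum_n a); [intros n; apply sum_n_Reals|exact H].
Qed.

Definition series_tail (a : nat -> R) (n : nat) : R := Series (fun k => a (S n + k)%nat).

Lemma Series_split_tail (a : nat -> R) (n : nat) : ex_series a ->
  Series a = sum_f_R0 a n + series_tail a n.
Proof. intros H. unfold series_tail. now rewrite (Series_incr_n a (S n)) by (lia || exact H). Qed.

Lemma is_lim_seq_series_tail (a : nat -> R) : ex_series a -> is_lim_seq (series_tail a) 0.
Proof.
  intros H. apply is_lim_seq_ext with (fun n => Series a - sum_f_R0 a n).
  - intros n. rewrite (Series_split_tail a n H). ring.
  - replace 0 with (Series a - Series a) by ring.
    apply is_lim_seq_minus'; [apply is_lim_seq_const|apply is_lim_seq_sum_f_R0, H].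
Qed.

Lemma Series_finite_support (a : nat -> R) (N : nat) :
  (forall n, (N < n)%nat -> a n = 0) -> ex_series a -> Series a = sum_f_R0 a N.
Proof.
  intros Hz H. rewrite (Series_split_tail a N H). unfold series_tail.
  rewrite (Series_ext _ (fun k => 0 * a k)), Series_scal_l; [ring|].
  intros k. rewrite Hz by lia. ring.
Qed.

Lemma tannery (a : nat -> nat -> R) (l M : nat -> R) :
  (forall n, is_lim_seq (fun N => a N n) (l n)) ->
  (forall N n, Rabs (a N n) <= M n) -> ex_series M ->
  is_lim_seq (fun N => Series (a N)) (Series l).
Proof.
  intros Hl HM exM.
  assert (Ml : forall n, Rabs (l n) <= M n).
  { intros n. pose proof (is_lim_seq_le _ _ _ _ (fun N => HM N n)
                            (is_lim_seq_abs _ _ (Hl n)) (is_lim_seq_const (M n))) as H.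
    exact H. }
  assert (exl : ex_series l) by (apply (ex_series_Rabs_le _ M); assumption).
  assert (exa : forall N, ex_series (a N)) by (intros N; apply (ex_series_Rabs_le _ M); auto).
  apply is_lim_seq_spec. intros eps.
  pose proof (is_lim_seq_series_tail M exM) as Ht. apply is_lim_seq_spec in Ht.
  destruct (Ht (pos_div_2 (pos_div_2 eps))) as [n0 Hn0].
  specialize (Hn0 n0 (le_n _)). simpl in Hn0.
  assert (Hh : is_lim_seq (fun N => sum_f_R0 (a N) n0) (sum_f_R0 l n0)).
  { clear Hn0. induction n0 as [|n0 IH]; [apply Hl|].
    apply is_lim_seq_plus'; [exact IH|apply Hl]. }
  apply is_lim_seq_spec in Hh. destruct (Hh (pos_div_2 eps)) as [N0 HN0].
  exists N0. intros N HN. specialize (HN0 N HN). simpl in HN0.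
  rewrite (Series_split_tail (a N) n0 (exa N)), (Series_split_tail l n0 exl).
  assert (T1 : Rabs (series_tail (a N) n0) <= series_tail M n0)
    by (apply Series_Rabs_le; [intros k; apply HM|apply ex_series_incr_n, exM]).
  assert (T2 : Rabs (series_tail l n0) <= series_tail M n0)
    by (apply Series_Rabs_le; [intros k; apply Ml|apply ex_series_incr_n, exM]).
  rewrite Rminus_0_r, Rabs_pos_eq in Hn0 by (eapply Rle_trans; [apply Rabs_pos|exact T1]).
  destruct eps as [e he]. simpl in *.
  apply Rabs_lt_between in HN0. apply Rabs_le_between in T1. apply Rabs_le_between in T2.
  apply Rabs_lt_between. lra.
Qed.

Lemma tannery_finite_support (a : nat -> nat -> R) (l M : nat -> R) :
  (forall N n, (N < n)%nat -> a N n = 0) ->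
  (forall n, is_lim_seq (fun N => a N n) (l n)) ->
  (forall N n, Rabs (a N n) <= M n) -> ex_series M ->
  is_lim_seq (fun N => sum_f_R0 (a N) N) (Series l).
Proof.
  intros Hz Hl HM exM.
  apply is_lim_seq_ext with (fun N => Series (a N)); [|exact (tannery a l M Hl HM exM)].
  intros N. apply Series_finite_support; [apply Hz|apply (ex_series_Rabs_le _ M); auto].
Qed.

Lemma CVU_series_Mtest (u : nat -> R -> R) (M : nat -> R) (c : R) (r : posreal) :
  (forall n y, Rabs (u n y) <= M n) -> ex_series M ->
  CVU (fun n y => sum_f_R0 (fun k => u k y) n) (fun y => Series (fun k => u k y)) c r.
Proof.
  intros HM exM eps heps.
  pose proof (is_lim_seq_series_tail M exM) as Ht. apply is_lim_seq_spec in Ht.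
  destruct (Ht (mkposreal eps heps)) as [N0 HN0].
  exists N0. intros n y Hn _. specialize (HN0 n Hn). simpl in HN0.
  assert (exu : ex_series (fun k => u k y)) by (apply (ex_series_Rabs_le _ M); auto).
  rewrite (Series_split_tail _ n exu).
  replace (sum_f_R0 (fun k => u k y) n + series_tail (fun k => u k y) n - sum_f_R0 (fun k => u k y) n)
    with (series_tail (fun k => u k y) n) by ring.
  eapply Rle_lt_trans; [apply Series_Rabs_le; [intros k; apply HM|apply ex_series_incr_n, exM]|].
  rewrite Rminus_0_r in HN0. eapply Rle_lt_trans; [apply Rle_abs|exact HN0].
Qed.

(** * Passage to the limit *)

Lemma filterlim_nat_ge (phi : nat -> nat) (c : nat) :
  (forall K, (K <= phi K + c)%nat) -> filterlim phi eventually eventually.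
Proof.
  intros Hphi P [N HN]. exists (N + c)%nat. intros K HK. apply HN. specialize (Hphi K). lia.
Qed.

Section GaussianSums.
Variable q : R.
Hypothesis q_gt0 : 0 < q.
Hypothesis q_lt1 : q < 1.

Lemma ex_series_q_pow : ex_series (fun n => q ^ n).
Proof. apply ex_series_geom. rewrite Rabs_pos_eq; lra. Qed.

Lemma INR_mul_pow_le (n : nat) : INR n * q ^ n <= q / (1 - q).
Proof.
  set (h := (1 - q) / q).
  assert (Hh : 0 < h) by (apply Rdiv_lt_0_compat; lra).
  pose proof (Rle_pow_lin h n (Rlt_le _ _ Hh)) as Hb.
  replace (1 + h) with (/ q) in Hb by (unfold h; field; lra). rewrite pow_inv in Hb.
  assert (Hq : 0 < q ^ n) by (apply pow_lt; lra).
  assert (H2 : (1 + INR n * h) * q ^ n <= 1).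
  { apply Rmult_le_reg_r with (/ q ^ n); [apply Rinv_0_lt_compat; lra|].
    now rewrite Rmult_assoc, Rinv_r, Rmult_1_r, Rmult_1_l by lra. }
  apply Rmult_le_reg_r with h; [exact Hh|].
  replace (q / (1 - q) * h) with 1 by (unfold h; field; lra).
  pose proof (pos_INR n). nra.
Qed.

Lemma ex_series_odd_q_pow : ex_series (fun n => (2 * INR n + 1) * q ^ (n * n + n)).
Proof.
  apply (ex_series_Rabs_le _ (fun n => (2 * (q / (1 - q)) + 1) * q ^ n)).
  - intros n. pose proof (pos_INR n). pose proof (INR_mul_pow_le n).
    assert (0 <= q ^ n <= 1)
      by (split; [apply pow_le; lra|apply (pow_le_pow_le_1 q 0); lra || lia]).
    assert (0 <= q ^ (n * n) <= q ^ n)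
      by (split; [apply pow_le; lra|apply pow_le_pow_le_1; lra || nia]).
    rewrite pow_add, Rabs_pos_eq by (apply Rmult_le_pos; [lra|apply Rmult_le_pos; lra]).
    replace ((2 * INR n + 1) * (q ^ (n * n) * q ^ n))
      with ((2 * (INR n * q ^ n) + q ^ n) * q ^ (n * n)) by ring.
    assert (0 <= INR n * q ^ n) by (apply Rmult_le_pos; lra).
    apply Rmult_le_compat; lra.
  - apply (ex_series_scal_l (2 * (q / (1 - q)) + 1) (fun n => q ^ n)), ex_series_q_pow.
Qed.

Lemma ex_series_q_pow_sq : ex_series (fun n => q ^ (n * n)).
Proof.
  apply (ex_series_Rabs_le _ (fun n => q ^ n)); [|apply ex_series_q_pow].
  intros n. rewrite Rabs_pos_eq by (apply pow_le; lra).
  apply pow_le_pow_le_1; lra || nia.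
Qed.

End GaussianSums.

Section CoefficientLimits.
Variable q : R.
Hypothesis q_gt0 : 0 < q.
Hypothesis q_lt1 : q < 1.
Local Notation p := (q * q).
Local Notation G := (qpoch_inf (q * q)).
Local Notation C := (/ (qpoch_lb (q * q) * qpoch_lb (q * q))).

Let p_gt0 : 0 < p. Proof. nra. Qed.
Let p_lt1 : p < 1. Proof. nra. Qed.
Let G_pos : 0 < G. Proof. exact (qpoch_inf_pos p p_gt0 p_lt1). Qed.

Lemma is_lim_seq_qbinom (phi psi : nat -> nat) (c : nat) :
  (forall K, (K <= phi K + c)%nat) -> (forall K, (K <= psi K + c)%nat) ->
  is_lim_seq (fun K => qbinom p (phi K + psi K) (phi K)) (/ G).
Proof.
  intros Hphi Hpsi.
  assert (Hlim : forall chi : nat -> nat, (forall K, (K <= chi K + c)%nat) ->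
                   is_lim_seq (fun K => qpoch p (chi K)) G).
  { intros chi Hchi. apply is_lim_seq_subseq, is_lim_seq_qpoch; [|assumption..].
    apply (filterlim_nat_ge chi c Hchi). }
  apply is_lim_seq_ext with (fun K => qpoch p (phi K + psi K) / (qpoch p (phi K) * qpoch p (psi K))).
  { intros K. rewrite qbinom_closed by lia. do 2 f_equal. f_equal. lia. }
  replace (/ G) with (G / (G * G)) by (field; lra).
  apply is_lim_seq_div'; [| |nra].
  - apply (Hlim (fun K => phi K + psi K)%nat). intros K. specialize (Hphi K). lia.
  - apply is_lim_seq_mult'; apply Hlim; assumption.
Qed.

Lemma is_lim_seq_coef2 (n : nat) : is_lim_seq (fun K => coef2 q K n) (q ^ (n * n + n) * / G).
Proof.
  apply is_lim_seq_ext_loc with (fun K => qbinom p ((K + 1 + n) + (K - n)) (K + 1 + n) * q ^ (n * n + n)).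
  { exists n. intros K HK. unfold coef2. do 2 f_equal. lia. }
  replace (q ^ (n * n + n) * / G) with (/ G * q ^ (n * n + n)) by ring.
  apply (is_lim_seq_scal_r _ _ (/ G)).
  apply (is_lim_seq_qbinom (fun K => K + 1 + n)%nat (fun K => K - n)%nat n); intros; lia.
Qed.

Lemma is_lim_seq_coef3 (n : nat) : is_lim_seq (fun K => coef3 q K n) (q ^ (n * n) * / G).
Proof.
  apply is_lim_seq_ext_loc with (fun K => qbinom p ((K + n) + (K - n)) (K + n) * q ^ (n * n)).
  { exists n. intros K HK. unfold coef3. do 2 f_equal. lia. }
  replace (q ^ (n * n) * / G) with (/ G * q ^ (n * n)) by ring.
  apply (is_lim_seq_scal_r _ _ (/ G)).
  apply (is_lim_seq_qbinom (fun K => K + n)%nat (fun K => K - n)%nat n); intros; lia.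
Qed.

Lemma coef2_abs_le (K n : nat) : Rabs (coef2 q K n) <= C * q ^ (n * n + n).
Proof.
  unfold coef2. pose proof (qbinom_ge0 p p_gt0 p_lt1 (2 * K + 1) (K + 1 + n)).
  pose proof (qbinom_le p p_gt0 p_lt1 (2 * K + 1) (K + 1 + n)).
  assert (0 <= q ^ (n * n + n)) by (apply pow_le; lra).
  rewrite Rabs_pos_eq by (apply Rmult_le_pos; lra). apply Rmult_le_compat_r; lra.
Qed.

Lemma coef3_abs_le (K n : nat) : Rabs (coef3 q K n) <= C * q ^ (n * n).
Proof.
  unfold coef3. pose proof (qbinom_ge0 p p_gt0 p_lt1 (2 * K) (K + n)).
  pose proof (qbinom_le p p_gt0 p_lt1 (2 * K) (K + n)).
  assert (0 <= q ^ (n * n)) by (apply pow_le; lra).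
  rewrite Rabs_pos_eq by (apply Rmult_le_pos; lra). apply Rmult_le_compat_r; lra.
Qed.

Lemma is_lim_seq_coef2_sum (w : nat -> R) : (forall n, Rabs (w n) <= 2 * INR n + 1) ->
  is_lim_seq (fun K => sum_f_R0 (fun n => coef2 q K n * w n) K)
             (Series (fun n => q ^ (n * n + n) * w n) * / G).
Proof.
  intros Hw. rewrite <- Series_scal_r.
  apply (tannery_finite_support _ _ (fun n => C * ((2 * INR n + 1) * q ^ (n * n + n)))).
  - intros K n H. rewrite coef2_gt by lia. ring.
  - intros n. replace (q ^ (n * n + n) * w n * / G) with (q ^ (n * n + n) * / G * w n) by ring.
    apply (is_lim_seq_scal_r _ (w n) _ (is_lim_seq_coef2 n)).
  - intros K n. rewrite Rabs_mult.
    pose proof (coef2_abs_le K n). pose proof (Hw n). pose proof (Rabs_pos (coef2 q K n)).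
    pose proof (Rabs_pos (w n)). assert (0 <= q ^ (n * n + n)) by (apply pow_le; lra).
    replace (C * ((2 * INR n + 1) * q ^ (n * n + n))) with (C * q ^ (n * n + n) * (2 * INR n + 1)) by ring.
    apply Rmult_le_compat; lra.
  - apply (ex_series_scal_l C (fun n => (2 * INR n + 1) * q ^ (n * n + n))), ex_series_odd_q_pow; assumption.
Qed.

Lemma is_lim_seq_coef3_sum (s : R) : Rabs s = 1 ->
  is_lim_seq (fun K => sum_f_R0 (fun n => coef3 q K n * s ^ n) K)
             (Series (fun n => q ^ (n * n) * s ^ n) * / G).
Proof.
  intros Hs. rewrite <- Series_scal_r.
  apply (tannery_finite_support _ _ (fun n => C * q ^ (n * n))).
  - intros K n H. rewrite coef3_gt by lia. ring.
  - intros n. replace (q ^ (n * n) * s ^ n * / G) with (q ^ (n * n) * / G * s ^ n) by ring.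
    apply (is_lim_seq_scal_r _ (s ^ n) _ (is_lim_seq_coef3 n)).
  - intros K n. rewrite Rabs_mult, <- RPow_abs, Hs, pow1, Rmult_1_r. apply coef3_abs_le.
  - apply (ex_series_scal_l C (fun n => q ^ (n * n))), ex_series_q_pow_sq; assumption.
Qed.

End CoefficientLimits.

(* With the nome [q = exp (- PI tau0)]: [theta2 y = 2 q^(1/4) theta2_sum q y],
   [theta2' y = - 2 q^(1/4) theta2_deriv_sum q y], [theta3 0 = 2 theta3_sum q 1 - 1]
   and [theta4 0 = 2 theta3_sum q (-1) - 1]. *)
Definition theta2_sum (q y : R) : R :=
  Series (fun n => q ^ (n * n + n) * cos ((2 * INR n + 1) * y)).
Definition theta2_deriv_sum (q y : R) : R :=
  Series (fun n => q ^ (n * n + n) * ((2 * INR n + 1) * sin ((2 * INR n + 1) * y))).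
Definition theta3_sum (q s : R) : R := Series (fun n => q ^ (n * n) * s ^ n).

Section ProductLimits.
Variable q : R.
Hypothesis q_gt0 : 0 < q.
Hypothesis q_lt1 : q < 1.
Local Notation p := (q * q).
Local Notation G := (qpoch_inf (q * q)).

Let p_gt0 : 0 < p. Proof. nra. Qed.
Let p_lt1 : p < 1. Proof. nra. Qed.
Let G_pos : 0 < G. Proof. exact (qpoch_inf_pos p p_gt0 p_lt1). Qed.

Lemma is_lim_seq_prod2 (y : R) :
  is_lim_seq (fun K => cos y * prod2 q K y) (theta2_sum q y * / G).
Proof.
  apply is_lim_seq_ext with (fun K => sum_f_R0 (fun n => coef2 q K n * cos ((2 * INR n + 1) * y)) K).
  - intros K. symmetry. apply prod2_expand; assumption.
  - apply is_lim_seq_coef2_sum; [assumption..|].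
    intros n. pose proof (pos_INR n). pose proof (COS_bound ((2 * INR n + 1) * y)).
    apply Rabs_le. lra.
Qed.

Lemma is_lim_seq_prod2_deriv (x : R) :
  is_lim_seq (fun K => sin x * prod2 q K x - cos x * prod2_deriv q K x)
             (theta2_deriv_sum q x * / G).
Proof.
  apply is_lim_seq_ext
    with (fun K => sum_f_R0 (fun n => coef2 q K n * ((2 * INR n + 1) * sin ((2 * INR n + 1) * x))) K).
  - intros K. apply prod2_expand_deriv. lra.
  - apply is_lim_seq_coef2_sum; [assumption..|].
    intros n. pose proof (pos_INR n). pose proof (SIN_bound ((2 * INR n + 1) * x)).
    rewrite Rabs_mult, (Rabs_pos_eq (2 * INR n + 1)) by lra.
    assert (Rabs (sin ((2 * INR n + 1) * x)) <= 1) by (apply Rabs_le; lra).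
    apply Rle_trans with ((2 * INR n + 1) * 1); [apply Rmult_le_compat_l|]; lra.
Qed.

Lemma is_lim_seq_prod3 (s : R) : s = 1 \/ s = -1 ->
  is_lim_seq (fun K => prod3 q s K) ((2 * theta3_sum q s - 1) * / G).
Proof.
  intros Hs.
  assert (Habs : Rabs s = 1) by (destruct Hs as [-> | ->]; [apply Rabs_R1|rewrite Rabs_left; lra]).
  assert (Hsq : s * s = 1) by (destruct Hs as [-> | ->]; ring).
  apply is_lim_seq_ext with (fun K => 2 * sum_f_R0 (fun n => coef3 q K n * s ^ n) K - coef3 q K 0).
  - intros K. symmetry. apply prod3_expand; assumption.
  - replace ((2 * theta3_sum q s - 1) * / G)
      with (2 * (theta3_sum q s * / G) - q ^ (0 * 0) * / G) by (simpl; ring).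
    apply is_lim_seq_minus'; [apply is_lim_seq_mult'|apply is_lim_seq_coef3; assumption].
    + apply is_lim_seq_const.
    + apply is_lim_seq_coef3_sum; assumption.
Qed.

Lemma is_lim_seq_prod_odd_sq :
  is_lim_seq (fun K => prod_odd p K * prod_odd p K)
             ((2 * theta3_sum q 1 - 1) * / G * ((2 * theta3_sum q (-1) - 1) * / G)).
Proof.
  apply is_lim_seq_ext with (fun K => prod3 q 1 K * prod3 q (-1) K); [apply prod3_mul_opp|].
  apply is_lim_seq_mult'; apply is_lim_seq_prod3; auto.
Qed.

End ProductLimits.

Section SeriesInequalities.
Variable q : R.
Hypothesis q_gt0 : 0 < q.
Hypothesis q_lt1 : q < 1.
Local Notation p := (q * q).
Local Notation G := (qpoch_inf (q * q)).
Local Notation A := ((2 * theta3_sum q 1 - 1) * (2 * theta3_sum q (-1) - 1)).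

Let p_gt0 : 0 < p. Proof. nra. Qed.
Let p_lt1 : p < 1. Proof. nra. Qed.
Let G_pos : 0 < G. Proof. exact (qpoch_inf_pos p p_gt0 p_lt1). Qed.

Lemma theta2_sum_pos (y : R) : 0 < y < PI / 2 -> 0 < theta2_sum q y.
Proof.
  intros Hy. assert (Hc : 0 < cos y) by (apply cos_gt_0; lra).
  assert (H : cos y * (G * G) <= theta2_sum q y * / G).
  { apply (is_lim_seq_le (fun K => cos y * (qpoch p K * qpoch p K)) (fun K => cos y * prod2 q K y)
             (cos y * (G * G)) (theta2_sum q y * / G)).
    - intros K. apply Rmult_le_compat_l; [lra|apply prod2_ge_qpoch; assumption].
    - apply is_lim_seq_mult'; [apply is_lim_seq_const|].
      apply is_lim_seq_mult'; apply is_lim_seq_qpoch; assumption.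
    - apply is_lim_seq_prod2; assumption. }
  assert (0 < theta2_sum q y * / G) by (eapply Rlt_le_trans; [|exact H]; apply Rmult_lt_0_compat; nra).
  apply Rmult_lt_reg_r with (/ G); [apply Rinv_0_lt_compat; lra|lra].
Qed.

Lemma theta3_sum_prod_pos : 0 < A.
Proof.
  pose proof (qpoch_lb_pos p) as Hlb.
  assert (H : qpoch_lb p * qpoch_lb p <= A * / G * / G).
  { replace (A * / G * / G)
      with ((2 * theta3_sum q 1 - 1) * / G * ((2 * theta3_sum q (-1) - 1) * / G)) by ring.
    apply (is_lim_seq_le (fun _ => qpoch_lb p * qpoch_lb p) (fun K => prod_odd p K * prod_odd p K)
             (qpoch_lb p * qpoch_lb p)
             ((2 * theta3_sum q 1 - 1) * / G * ((2 * theta3_sum q (-1) - 1) * / G)));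
      [|apply is_lim_seq_const|apply is_lim_seq_prod_odd_sq; assumption].
    intros K. pose proof (qpoch_ge_lb p p_gt0 p_lt1 (2 * K)).
    pose proof (qpoch_le_prod_odd p p_gt0 p_lt1 K). apply Rmult_le_compat; lra. }
  replace A with (A * / G * / G * (G * G)) by (field; lra).
  apply Rmult_lt_0_compat; nra.
Qed.

Lemma theta2_deriv_sum_gt (x : R) : 0 < x < PI / 2 ->
  A * theta2_sum q (PI / 2 - x) < theta2_deriv_sum q x.
Proof.
  intros Hx. set (d := first_factor_gain q x).
  assert (Hd : 0 < d) by (apply first_factor_gain_pos; assumption).
  assert (HS : 0 < theta2_sum q (PI / 2 - x)) by (apply theta2_sum_pos; lra).
  pose proof theta3_sum_prod_pos as HA.
  assert (Hle : (1 + d) * (theta2_sum q (PI / 2 - x) * / G) * (A * / G * / G * (G * G))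
                <= theta2_deriv_sum q x * / G).
  { apply (is_lim_seq_le _ _
      ((1 + d) * (theta2_sum q (PI / 2 - x) * / G) * (A * / G * / G * (G * G)))
      (theta2_deriv_sum q x * / G) (fun K => prod2_key_ineq q q_gt0 q_lt1 K x Hx)).
    - apply is_lim_seq_mult'; [apply is_lim_seq_mult'; [apply is_lim_seq_const|]|].
      + apply (is_lim_seq_incr_1 (fun K => cos (PI / 2 - x) * prod2 q K (PI / 2 - x))).
        apply is_lim_seq_prod2; assumption.
      + apply is_lim_seq_ext with
          (fun K => prod_odd p (S K) * prod_odd p (S K) * (qpoch p (S K) * qpoch p (S K)));
          [intros K; ring|].
        replace (A * / G * / G)
          with ((2 * theta3_sum q 1 - 1) * / G * ((2 * theta3_sum q (-1) - 1) * / G)) by ring.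
        apply is_lim_seq_mult'.
        * apply (is_lim_seq_incr_1 (fun K => prod_odd p K * prod_odd p K)).
          apply is_lim_seq_prod_odd_sq; assumption.
        * apply (is_lim_seq_incr_1 (fun K => qpoch p K * qpoch p K)).
          apply is_lim_seq_mult'; apply is_lim_seq_qpoch; assumption.
    - apply (is_lim_seq_incr_1 (fun K => sin x * prod2 q K x - cos x * prod2_deriv q K x)).
      apply is_lim_seq_prod2_deriv; assumption. }
  replace ((1 + d) * (theta2_sum q (PI / 2 - x) * / G) * (A * / G * / G * (G * G)))
    with ((1 + d) * theta2_sum q (PI / 2 - x) * A * / G) in Hle by (field; lra).
  apply Rmult_le_reg_r in Hle; [|apply Rinv_0_lt_compat; lra].
  assert (0 < d * theta2_sum q (PI / 2 - x) * A) by (apply Rmult_lt_0_compat; [apply Rmult_lt_0_compat|]; lra).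
  nra.
Qed.

End SeriesInequalities.

(** * Theta functions *)

Lemma sum_f_R0_opp (a : nat -> R) (N : nat) : sum_f_R0 (fun n => - a n) N = - sum_f_R0 a N.
Proof. induction N as [|N IH]; simpl; [ring|]. rewrite IH. ring. Qed.

Lemma is_derive_theta2_sum (q x : R) : 0 < q < 1 ->
  is_derive (theta2_sum q) x (- theta2_deriv_sum q x).
Proof.
  intros Hq.
  set (u := fun n y => - (q ^ (n * n + n) * ((2 * INR n + 1) * sin ((2 * INR n + 1) * y)))).
  set (M := fun n => (2 * INR n + 1) * q ^ (n * n + n)).
  assert (HM : forall n, 0 <= M n)
    by (intros n; pose proof (pos_INR n); apply Rmult_le_pos; [lra|apply pow_le; lra]).
  assert (exM : ex_series M) by (apply ex_series_odd_q_pow; lra).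
  assert (Hu : forall n y, Rabs (u n y) <= M n).
  { intros n y. unfold u, M. rewrite Rabs_Ropp, !Rabs_mult.
    pose proof (pos_INR n). pose proof (Rabs_pos (sin ((2 * INR n + 1) * y))).
    assert (Rabs (sin ((2 * INR n + 1) * y)) <= 1) by (apply Rabs_le, SIN_bound).
    assert (0 <= q ^ (n * n + n)) by (apply pow_le; lra).
    rewrite (Rabs_pos_eq (q ^ _)), (Rabs_pos_eq (2 * INR n + 1)) by lra.
    apply Rle_trans with (q ^ (n * n + n) * ((2 * INR n + 1) * 1)); [|right; ring].
    apply Rmult_le_compat_l, Rmult_le_compat_l; lra. }
  unfold theta2_deriv_sum. rewrite <- Series_opp. apply is_derive_Reals.
  apply (CVU_derivable (fun K y => sum_f_R0 (fun n => q ^ (n * n + n) * cos ((2 * INR n + 1) * y)) K)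
           (fun K y => sum_f_R0 (fun n => u n y) K) _ (fun y => Series (fun n => u n y))
           x (mkposreal 1 Rlt_0_1)).
  - exact (CVU_series_Mtest u M x _ Hu exM).
  - intros y _. apply is_lim_seq_Reals, is_lim_seq_sum_f_R0.
    apply (ex_series_Rabs_le _ M); [|exact exM]. intros n. unfold M.
    pose proof (pos_INR n). assert (0 <= q ^ (n * n + n)) by (apply pow_le; lra).
    rewrite Rabs_mult, (Rabs_pos_eq (q ^ _)) by assumption.
    assert (Rabs (cos ((2 * INR n + 1) * y)) <= 1) by apply Rabs_le, COS_bound.
    pose proof (Rabs_pos (cos ((2 * INR n + 1) * y))). nra.
  - intros K y _. apply is_derive_Reals. unfold u. rewrite sum_f_R0_opp. apply is_derive_sum_cos.
  - unfold Boule. simpl. rewrite Rminus_diag, Rabs_R0. lra.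
Qed.

Lemma theta3_sum_incr_1 (q s : R) : 0 < q < 1 -> Rabs s = 1 ->
  theta3_sum q s = 1 + Series (fun n => q ^ (S n * S n) * s ^ S n).
Proof.
  intros Hq Hs. unfold theta3_sum. rewrite Series_incr_1; [simpl; ring|].
  apply (ex_series_Rabs_le _ (fun n => q ^ (n * n))); [|apply ex_series_q_pow_sq; lra].
  intros n. rewrite Rabs_mult, <- (RPow_abs s), Hs, pow1, Rmult_1_r.
  rewrite Rabs_pos_eq by (apply pow_le; lra). lra.
Qed.

Lemma exp_pow_INR (a : R) (n : nat) : exp a ^ n = exp (INR n * a).
Proof.
  induction n as [|n IH]; [simpl; now rewrite Rmult_0_l, exp_0|].
  rewrite S_INR. simpl. rewrite IH, <- exp_plus. f_equal. ring.
Qed.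

Lemma cos_odd_mul_shift (n : nat) (x : R) :
  cos ((2 * INR n + 1) * (PI / 2 - x)) = (-1) ^ n * sin ((2 * INR n + 1) * x).
Proof.
  replace ((2 * INR n + 1) * (PI / 2 - x)) with ((2 * INR n + 1) * (PI / 2) - (2 * INR n + 1) * x) by ring.
  rewrite cos_minus.
  assert (H : cos ((2 * INR n + 1) * (PI / 2)) = 0 /\ sin ((2 * INR n + 1) * (PI / 2)) = (-1) ^ n).
  { induction n as [|n [Hc Hs]].
    - replace ((2 * INR 0 + 1) * (PI / 2)) with (PI / 2) by (simpl; ring).
      rewrite cos_PI2, sin_PI2. split; reflexivity.
    - rewrite S_INR. replace ((2 * (INR n + 1) + 1) * (PI / 2)) with ((2 * INR n + 1) * (PI / 2) + PI) by field.
      rewrite neg_cos, neg_sin, Hc, Hs. simpl. split; ring. }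
  destruct H as [-> ->]. ring.
Qed.

Section ThetaSeries.
Variable tau0 : R.
Hypothesis tau0_gt0 : 0 < tau0.

Definition nome : R := exp (- PI * tau0).

Lemma nome_bounds : 0 < nome < 1.
Proof.
  unfold nome. split; [apply exp_pos|]. rewrite <- exp_0. apply exp_increasing.
  pose proof PI_RGT_0. nra.
Qed.

Lemma qpow_half_odd_sq (n : nat) :
  qpow tau0 ((INR n + / 2) ^ 2) = exp (- PI * tau0 / 4) * nome ^ (n * n + n).
Proof.
  unfold qpow, nome. rewrite exp_pow_INR, <- exp_plus. f_equal.
  rewrite plus_INR, mult_INR. field.
Qed.

Lemma qpow_sq (n : nat) : qpow tau0 (INR (S n) ^ 2) = nome ^ (S n * S n).
Proof. unfold qpow, nome. rewrite exp_pow_INR, mult_INR. f_equal. ring. Qed.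

Lemma theta2_eq (y : R) : theta2 tau0 y = 2 * exp (- PI * tau0 / 4) * theta2_sum nome y.
Proof.
  unfold theta2, theta2_sum. rewrite Rmult_assoc. f_equal. rewrite <- Series_scal_l.
  apply Series_ext. intros n. rewrite qpow_half_odd_sq. ring.
Qed.

Lemma theta1_eq (y : R) : theta1 tau0 y = 2 * exp (- PI * tau0 / 4) * theta2_sum nome (PI / 2 - y).
Proof.
  unfold theta1, theta2_sum. rewrite Rmult_assoc. f_equal. rewrite <- Series_scal_l.
  apply Series_ext. intros n. rewrite qpow_half_odd_sq, cos_odd_mul_shift. ring.
Qed.

Lemma theta3_eq : theta3 tau0 0 = 2 * theta3_sum nome 1 - 1.
Proof.
  unfold theta3. rewrite (theta3_sum_incr_1 nome 1 nome_bounds ltac:(apply Rabs_R1)).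
  rewrite (Series_ext _ (fun n => nome ^ (S n * S n) * 1 ^ S n)); [ring|].
  intros n. rewrite qpow_sq, Rmult_0_r, cos_0, pow1. ring.
Qed.

Lemma theta4_eq : theta4 tau0 0 = 2 * theta3_sum nome (-1) - 1.
Proof.
  unfold theta4. rewrite (theta3_sum_incr_1 nome (-1) nome_bounds ltac:(rewrite Rabs_left; lra)).
  rewrite (Series_ext _ (fun n => nome ^ (S n * S n) * (-1) ^ S n)); [ring|].
  intros n. rewrite qpow_sq, Rmult_0_r, cos_0. ring.
Qed.

Lemma is_derive_theta2 (x : R) :
  is_derive (theta2 tau0) x (- (2 * exp (- PI * tau0 / 4) * theta2_deriv_sum nome x)).
Proof.
  apply (is_derive_ext (fun y => 2 * exp (- PI * tau0 / 4) * theta2_sum nome y));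
    [intros y; symmetry; apply theta2_eq|].
  replace (- (2 * exp (- PI * tau0 / 4) * theta2_deriv_sum nome x))
    with (2 * exp (- PI * tau0 / 4) * - theta2_deriv_sum nome x) by ring.
  apply (is_derive_scal (theta2_sum nome)), is_derive_theta2_sum, nome_bounds.
Qed.

End ThetaSeries.

Theorem lemma2 (tau0 alpha : R) :
  0 < tau0 -> 0 < alpha < PI ->
  g0_fun tau0 alpha > f_fun tau0 alpha /\ f_fun tau0 alpha > 0.
Proof.
  intros Htau Halpha.
  assert (Hx : 0 < alpha / 2 < PI / 2) by lra.
  pose proof (nome_bounds tau0 Htau) as [q_gt0 q_lt1].
  unfold g0_fun, f_fun.
  rewrite (is_derive_unique _ _ _ (is_derive_theta2 tau0 Htau (alpha / 2))),
    theta1_eq, theta2_eq, (theta3_eq tau0 Htau), (theta4_eq tau0 Htau).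
  pose proof (exp_pos (- PI * tau0 / 4)).
  pose proof (theta2_sum_pos _ q_gt0 q_lt1 _ Hx).
  pose proof (theta2_sum_pos _ q_gt0 q_lt1 (PI / 2 - alpha / 2) ltac:(lra)).
  pose proof (theta3_sum_prod_pos _ q_gt0 q_lt1).
  pose proof (theta2_deriv_sum_gt _ q_gt0 q_lt1 _ Hx).
  set (A := (2 * theta3_sum (nome tau0) 1 - 1) * (2 * theta3_sum (nome tau0) (-1) - 1)) in *.
  set (S := theta2_sum (nome tau0) (alpha / 2)) in *.
  set (S1 := theta2_sum (nome tau0) (PI / 2 - alpha / 2)) in *.
  set (S' := theta2_deriv_sum (nome tau0) (alpha / 2)) in *.
  set (c := exp (- PI * tau0 / 4)) in *.
  replace (- (1 / A) * (- (2 * c * S') / (2 * c * S))) with (S' / (A * S)) by (field; lra).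
  replace (2 * c * S1 / (2 * c * S)) with (S1 / S) by (field; lra).
  split.
  - apply Rlt_0_minus.
    replace (S' / (A * S) - S1 / S) with ((S' - A * S1) / (A * S)) by (field; lra).
    apply Rdiv_lt_0_compat; [lra|apply Rmult_lt_0_compat; lra].
  - apply Rdiv_lt_0_compat; lra.
Qed.
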